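(* Let $\sigma=(g_1,\dots,g_T)\in\Sigma$ and $t\in[T]$. Let $\lambda_{t-1}$ and $\lambda_t$ be the optimal Lagrange multipliers associated with the inventory constraint of the offline problems for $\sigma^{[1:t-1]}$ and $\sigma^{[1:t]}$ respectively (with $\lambda_0=0$), and let $\tilde v_t$ be the $t$-th coordinate of an optimal solution of the offline problem for $\sigma^{[1:t]}$. Then $$\eta_{OPT}(\sigma^{[1:t]})-\eta_{OPT}(\sigma^{[1:t-1]})\ \ge\ g_t(\tilde v_t)-\lambda_t\tilde v_t,$$ and $$\eta_{OPT}(\sigma^{[1:t]})-\eta_{OPT}(\sigma^{[1:t-1]})\ \le\ g_t(\tilde v_t)-\lambda_{t-1}\tilde v_t\ \le\ g_t(\hat v_t),$$ where $\hat v_t$ is a maximizer of $g_t$ over $[0,\Delta]$.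
   Context: Fix $\Delta>0$ and $0<m\le M$. Let $\mathcal G$ be the family of all functions $g:[0,\Delta]\to\mathbb{R}$ that are concave, increasing and differentiable on $[0,\Delta]$ with $g(0)=0$ and $g'(0)\in[m,M]$. An input is a finite sequence $\sigma=(g_1,\dots,g_T)$, $T\ge1$, $g_t\in\mathcal G$; $\Sigma$ is the set of all inputs. For $0\le t\le T$, $\sigma^{[1:t]}=(g_1,\dots,g_t)$ ($\sigma^{[1:0]}$ is empty). For a finite sequence $(g_1,\dots,g_t)$, the offline problem is $\max\sum_{\tau=1}^t g_\tau(v_\tau)$ subject to $\sum_{\tau=1}^t v_\tau\le\Delta$ and $v_\tau\ge0$, and $\eta_{OPT}(\sigma^{[1:t]})$ denotes its optimal value; $\eta_{OPT}$ of the empty sequence is $0$. The inventory constraint is the constraint $\sum_\tau v_\tau\le\Delta$. *)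

From Stdlib Require Import Reals Lra Lia.
Open Scope R_scope.

Fixpoint sum1 (n : nat) (f : nat -> R) : R :=
  match n with
  | O => 0
  | S k => sum1 k f + f (S k)
  end.

Definition derive_in (Delta : R) (g : R -> R) (x l : R) : Prop :=
  forall eps, 0 < eps -> exists delta, 0 < delta /\
    forall h, h <> 0 -> Rabs h < delta -> 0 <= x + h <= Delta ->
      Rabs ((g (x + h) - g x) / h - l) < eps.

Definition in_G (Delta m M : R) (g : R -> R) : Prop :=
  (forall x y a, 0 <= x <= Delta -> 0 <= y <= Delta -> 0 <= a <= 1 ->
     a * g x + (1 - a) * g y <= g (a * x + (1 - a) * y)) /\
  (forall x y, 0 <= x <= Delta -> 0 <= y <= Delta -> x <= y ->
     g x <= g y) /\
  (forall x, 0 <= x <= Delta -> exists l, derive_in Delta g x l) /\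
  g 0 = 0 /\
  (exists l, derive_in Delta g 0 l /\ m <= l <= M).

Definition feasible (Delta : R) (n : nat) (v : nat -> R) : Prop :=
  (forall tau, (1 <= tau <= n)%nat -> 0 <= v tau) /\ sum1 n v <= Delta.

Definition objective (g : nat -> R -> R) (n : nat) (v : nat -> R) : R :=
  sum1 n (fun tau => g tau (v tau)).

Definition is_opt_value (Delta : R) (g : nat -> R -> R) (n : nat) (eta : R) : Prop :=
  is_lub (fun y => exists v, feasible Delta n v /\ y = objective g n v) eta.

Definition is_opt_sol (Delta : R) (g : nat -> R -> R) (n : nat) (v : nat -> R) : Prop :=
  feasible Delta n v /\
  forall w, feasible Delta n w -> objective g n w <= objective g n v.

Definition lagrangian (Delta : R) (g : nat -> R -> R) (n : nat) (lam : R)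
  (v : nat -> R) : R :=
  objective g n v + lam * (Delta - sum1 n v).

(* lam is an optimal Lagrange multiplier of the inventory constraint:
   lam >= 0 and the optimal value equals the supremum of the Lagrangian
   over the remaining domain v_tau in [0, Delta] (no duality gap). *)
Definition lagrange_mult (Delta : R) (g : nat -> R -> R) (n : nat) (lam : R) : Prop :=
  0 <= lam /\
  exists eta, is_opt_value Delta g n eta /\
    is_lub (fun y => exists v, (forall tau, (1 <= tau <= n)%nat -> 0 <= v tau <= Delta)
                               /\ y = lagrangian Delta g n lam v) eta.

From Stdlib Require Import Reals Lra Lia.
Open Scope R_scope.

(* Write t = n + 1.  The only facts used about a Lagrange multiplier lam of a
   prefix problem are lam >= 0 and "weak duality": the Lagrangian at lam of
   every v in the box [0, Delta]^n is at most the optimal value.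

   - Lower bound: extend any feasible w of the n-prefix by an arbitrary last
     coordinate x in [0, Delta].  Weak duality at lam_t gives
     obj_n(w) + g_t(x) - lam_t x <= eta_t, since lam_t (Delta - sum w) >= 0;
     taking the supremum over w yields eta_t - eta_prev >= g_t(x) - lam_t x.
   - Upper bound: the first n coordinates of an optimal solution vt of the
     t-prefix leave room Delta - sum_n vt >= vt_t, so weak duality at lam_prev
     applied to vt gives eta_t - eta_prev <= g_t(vt_t) - lam_prev vt_t.
   - The last inequality holds because lam_prev vt_t >= 0 and vhat maximizes g_t. *)

Lemma sum1_ext (n : nat) (f f' : nat -> R) :
  (forall k, (1 <= k <= n)%nat -> f k = f' k) -> sum1 n f = sum1 n f'.
Proof.
  induction n as [|n IH]; simpl; intros Hff'; [reflexivity|].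
  rewrite IH by (intros; apply Hff'; lia).
  rewrite (Hff' (S n)) by lia. reflexivity.
Qed.

Lemma sum1_nonneg (n : nat) (f : nat -> R) :
  (forall k, (1 <= k <= n)%nat -> 0 <= f k) -> 0 <= sum1 n f.
Proof.
  induction n as [|n IH]; simpl; intros Hf; [lra|].
  assert (0 <= sum1 n f) by (apply IH; intros; apply Hf; lia).
  assert (0 <= f (S n)) by (apply Hf; lia).
  lra.
Qed.

Lemma sum1_le_term (n : nat) (f : nat -> R) :
  (forall k, (1 <= k <= n)%nat -> 0 <= f k) ->
  forall k, (1 <= k <= n)%nat -> f k <= sum1 n f.
Proof.
  induction n as [|n IH]; simpl; intros Hf k Hk; [lia|].
  assert (0 <= f (S n)) by (apply Hf; lia).
  destruct (Nat.eq_dec k (S n)) as [->|Hne].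
  - assert (0 <= sum1 n f) by (apply sum1_nonneg; intros; apply Hf; lia). lra.
  - assert (f k <= sum1 n f) by (apply IH; [intros; apply Hf; lia | lia]). lra.
Qed.

Definition in_box (Delta : R) (n : nat) (v : nat -> R) : Prop :=
  forall tau, (1 <= tau <= n)%nat -> 0 <= v tau <= Delta.

Lemma feasible_in_box (Delta : R) (n : nat) (v : nat -> R) :
  feasible Delta n v -> in_box Delta n v.
Proof.
  intros [Hnonneg Hsum] tau Htau. split; [auto|].
  pose proof (sum1_le_term n v Hnonneg tau Htau). lra.
Qed.

Lemma feasible_succ_in_box (Delta : R) (n : nat) (v : nat -> R) :
  feasible Delta (S n) v -> in_box Delta n v.
Proof.
  intros Hv tau Htau. apply (feasible_in_box Delta (S n) v Hv). lia.
Qed.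

Lemma opt_value_of_opt_sol (Delta : R) (g : nat -> R -> R) (n : nat)
  (eta : R) (v : nat -> R) :
  is_opt_value Delta g n eta -> is_opt_sol Delta g n v -> eta = objective g n v.
Proof.
  intros [Hub Hleast] [Hv Hvopt]. apply Rle_antisym.
  - apply Hleast. intros y [w [Hw ->]]. now apply Hvopt.
  - apply Hub. now exists v.
Qed.

Lemma lagrange_mult_weak_duality (Delta : R) (g : nat -> R -> R) (n : nat)
  (lam eta : R) :
  is_opt_value Delta g n eta -> lagrange_mult Delta g n lam ->
  forall v, in_box Delta n v -> lagrangian Delta g n lam v <= eta.
Proof.
  intros Heta [_ [eta' [Heta' [Hub _]]]] v Hv.
  rewrite <- (is_lub_u _ _ _ Heta' Heta).
  apply Hub. now exists v.
Qed.

Definition set_last (n : nat) (w : nat -> R) (x : R) : nat -> R :=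
  fun k => if Nat.eq_dec k (S n) then x else w k.

Lemma sum1_set_last (n : nat) (w : nat -> R) (x : R) (h : nat -> R -> R) :
  sum1 (S n) (fun k => h k (set_last n w x k)) = sum1 n (fun k => h k (w k)) + h (S n) x.
Proof.
  simpl. unfold set_last at 2.
  destruct (Nat.eq_dec (S n) (S n)) as [_|]; [|congruence].
  f_equal. apply sum1_ext. intros k Hk.
  unfold set_last. destruct (Nat.eq_dec k (S n)); [lia | reflexivity].
Qed.

Lemma increment_lower_bound (Delta : R) (g : nat -> R -> R) (n : nat)
  (eta_prev eta_next lam x : R) :
  is_opt_value Delta g n eta_prev ->
  0 <= lam ->
  (forall v, in_box Delta (S n) v -> lagrangian Delta g (S n) lam v <= eta_next) ->
  0 <= x <= Delta ->
  eta_next - eta_prev >= g (S n) x - lam * x.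
Proof.
  intros [_ Hleast] Hlam Hdual Hx.
  enough (eta_prev <= eta_next - (g (S n) x - lam * x)) by lra.
  apply Hleast. intros y [w [Hw ->]].
  assert (Hext : in_box Delta (S n) (set_last n w x)).
  { intros tau Htau. unfold set_last.
    destruct (Nat.eq_dec tau (S n)); [exact Hx|].
    apply (feasible_in_box Delta n w Hw). lia. }
  pose proof (Hdual _ Hext) as Hlag.
  unfold lagrangian, objective in Hlag.
  assert (Esum : sum1 (S n) (set_last n w x) = sum1 n w + x)
    by exact (sum1_set_last n w x (fun _ r => r)).
  rewrite sum1_set_last, Esum in Hlag.
  destruct Hw as [_ Hsum].
  assert (0 <= lam * (Delta - sum1 n w)) by (apply Rmult_le_pos; lra).
  unfold objective. nra.
Qed.

Lemma increment_upper_bound (Delta : R) (g : nat -> R -> R) (n : nat)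
  (eta_prev eta_next lam : R) (v : nat -> R) :
  0 <= lam ->
  (forall w, in_box Delta n w -> lagrangian Delta g n lam w <= eta_prev) ->
  feasible Delta (S n) v ->
  eta_next = objective g (S n) v ->
  eta_next - eta_prev <= g (S n) (v (S n)) - lam * v (S n).
Proof.
  intros Hlam Hdual Hv ->.
  pose proof (Hdual v (feasible_succ_in_box Delta n v Hv)) as Hlag.
  unfold lagrangian, objective in *. simpl.
  destruct Hv as [_ Hsum]. simpl in Hsum.
  assert (lam * v (S n) <= lam * (Delta - sum1 n v)) by (apply Rmult_le_compat_l; lra).
  lra.
Qed.

Theorem lemma2 (Delta m M : R) (HDelta : 0 < Delta) (Hm : 0 < m) (HmM : m <= M)
  (T : nat) (g : nat -> R -> R) (HT : (1 <= T)%nat)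
  (Hg : forall tau, (1 <= tau <= T)%nat -> in_G Delta m M (g tau))
  (t : nat) (Ht : (1 <= t <= T)%nat)
  (eta_prev eta_t lam_prev lam_t : R) (vt : nat -> R) (vhat : R) :
  is_opt_value Delta g (t - 1) eta_prev ->
  is_opt_value Delta g t eta_t ->
  lagrange_mult Delta g (t - 1) lam_prev ->
  lagrange_mult Delta g t lam_t ->
  is_opt_sol Delta g t vt ->
  (0 <= vhat <= Delta /\ forall x, 0 <= x <= Delta -> g t x <= g t vhat) ->
  eta_t - eta_prev >= g t (vt t) - lam_t * vt t /\
  eta_t - eta_prev <= g t (vt t) - lam_prev * vt t /\
  g t (vt t) - lam_prev * vt t <= g t vhat.
Proof.
  destruct t as [|n]; [lia|].
  replace (S n - 1)%nat with n by lia.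
  intros Hprev Hnext Hlam_prev Hlam_t Hvt [_ Hvhat].
  assert (Hvt_box : 0 <= vt (S n) <= Delta)
    by (apply (feasible_in_box Delta (S n) vt (proj1 Hvt)); lia).
  assert (Hlp : 0 <= lam_prev) by apply (proj1 Hlam_prev).
  split; [|split].
  - apply (increment_lower_bound Delta g n eta_prev); auto.
    + apply (proj1 Hlam_t).
    + exact (lagrange_mult_weak_duality Delta g (S n) lam_t eta_t Hnext Hlam_t).
  - apply (increment_upper_bound Delta g n eta_prev eta_t lam_prev vt Hlp).
    + exact (lagrange_mult_weak_duality Delta g n lam_prev eta_prev Hprev Hlam_prev).
    + apply (proj1 Hvt).
    + exact (opt_value_of_opt_sol Delta g (S n) eta_t vt Hnext Hvt).
  - assert (g (S n) (vt (S n)) <= g (S n) vhat) by (apply Hvhat; exact Hvt_box).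
    assert (0 <= lam_prev * vt (S n)) by (apply Rmult_le_pos; lra).
    lra.
Qed.
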